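(* Let $\mathcal{A}$ be a finite alphabet, $N$ a finite set of integers and $f:\mathcal{A}^{|N|}\to\mathcal{A}$ an irreducible local rule. (i) If $N$ is reflection-symmetrical or $\widehat{r\nu}f=f$ for some $\nu\in S_{\mathcal{A}}$, then the $\mathcal{T}_{\mathcal{A}}$-equivalence class of $\Phi^N_f$ is \[[\Phi^N_f]=\{\Phi^M_g\mid M\cong N,\ g\in[f]\}.\] (ii) Otherwise $N$ and $[f]$ induce the following two (distinct) equivalence classes of $\mathcal{C}_{\mathcal{A}}/\mathcal{T}_{\mathcal{A}}$: \[[\Phi^N_f]=\{\Phi^{d+N}_{\hat\nu f},\ \Phi^{d-N}_{\widehat{r\nu}f}\mid d\in\mathbb{Z},\ \nu\in S_{\mathcal{A}}\},\qquad [\Phi^N_{\hat rf}]=\{\Phi^{d+N}_{\widehat{r\nu}f},\ \Phi^{d-N}_{\hat\nu f}\mid d\in\mathbb{Z},\ \nu\in S_{\mathcal{A}}\}.\]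
   Context: For finite $N=\{j_1<\dots<j_n\}\subset\mathbb{Z}$ and $f:\mathcal{A}^n\to\mathcal{A}$, $\Phi^N_f(x)_i=f(x_{i+j_1}\dots x_{i+j_n})$. A local rule is irreducible if it depends on every argument (for each index some change of only that input letter changes the output). $S_{\mathcal{A}}$ is the group of permutations of $\mathcal{A}$. Rule operators: $\hat\nu f(w)=\nu f(\nu^{-1}w)$ (letterwise), $\hat r f(w)=f(rw)$ where $r(a_1\dots a_n)=a_n\dots a_1$, and $\widehat{r\nu}=\hat r\hat\nu$; $[f]=\{\hat\alpha f\mid \alpha\in\{1,r\}\times S_{\mathcal{A}}\}$. $\mathcal{C}_{\mathcal{A}}$ is the set of all CA global maps on $\mathcal{A}^{\mathbb{Z}}$. Operators on global maps: $\sigma\Phi=\sigma\circ\Phi$ with $(\sigma x)_i=x_{i+1}$; $\hat\nu\Phi(x)=\nu\Phi(\nu^{-1}x)$ (cellwise); $\hat r\Phi(x)=r\Phi(rx)$ with $(rx)_i=x_{-i}$. $\mathcal{T}_{\mathcal{A}}=\{\sigma^i\hat r^j\hat\nu\mid i\in\mathbb{Z},j\in\{0,1\},\nu\in S_{\mathcal{A}}\}$ is the group they generate, acting on $\mathcal{C}_{\mathcal{A}}$; $[\Phi]$ denotes the orbit of $\Phi$. For sets of integers, $d+N=\{d+i\mid i\in N\}$, $d-N=\{d-i\mid i\in N\}$; $M\cong N$ iff $N=j+M$ or $N=j-M$ for some $j\in\mathbb{Z}$; $N$ is reflection-symmetrical if $N=j-N$ for some $j\in\mathbb{Z}$. *)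

From HB Require Import structures.
From mathcomp Require Import all_boot all_order all_algebra all_fingroup.
Set Implicit Arguments. Unset Strict Implicit. Unset Printing Implicit Defensive.
Import GRing.Theory Num.Theory.
Local Open Scope ring_scope.

Definition config (A : Type) := int -> A.
Definition gmap (A : Type) := config A -> config A.

Definition nbhd (n : nat) (N : n.-tuple int) : bool :=
  sorted (fun a b : int => a < b) (tval N).

Definition Phi (A : Type) (n : nat) (N : n.-tuple int) (f : n.-tuple A -> A) : gmap A :=
  fun x i => f (map_tuple (fun j => x (i + j)) N).

Definition irreducible_rule (A : eqType) (n : nat) (f : n.-tuple A -> A) : Prop :=
  forall k : 'I_n, exists (w : n.-tuple A) (a : A),
    f w != f [tuple (if i == k then a else tnth w i) | i < n].

Definition rhat_nu (A : finType) (n : nat) (nu : {perm A}) (f : n.-tuple A -> A)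
  : n.-tuple A -> A := fun w => nu (f (map_tuple (fun a => (nu^-1)%g a) w)).
Definition rhat_r (A : Type) (n : nat) (f : n.-tuple A -> A) : n.-tuple A -> A :=
  fun w => f (rev_tuple w).
Definition rhat_rnu (A : finType) (n : nat) (nu : {perm A}) (f : n.-tuple A -> A)
  : n.-tuple A -> A := rhat_r (rhat_nu nu f).
Definition rule_class (A : finType) (n : nat) (f : n.-tuple A -> A)
  (g : n.-tuple A -> A) : Prop :=
  exists nu : {perm A}, g = rhat_nu nu f \/ g = rhat_rnu nu f.

Definition gshift (A : Type) (k : int) (F : gmap A) : gmap A :=
  fun x i => F x (i + k).
Definition ghat_nu (A : finType) (nu : {perm A}) (F : gmap A) : gmap A :=
  fun x i => nu (F (fun k => (nu^-1)%g (x k)) i).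
Definition crev (A : Type) (x : config A) : config A := fun i => x (- i).
Definition ghat_r (A : Type) (F : gmap A) : gmap A := fun x => crev (F (crev x)).
(* the element sigma^k r^b nu of T_A acting on F *)
Definition Tact (A : finType) (k : int) (b : bool) (nu : {perm A}) (F : gmap A) : gmap A :=
  gshift k ((if b then @ghat_r A else id) (ghat_nu nu F)).
Definition T_orbit (A : finType) (F : gmap A) (G : gmap A) : Prop :=
  exists (k : int) (b : bool) (nu : {perm A}), G = Tact k b nu F.

(* d + N and d - N as (strictly increasing) tuples *)
Definition ntrans (n : nat) (d : int) (N : n.-tuple int) : n.-tuple int :=
  map_tuple (fun j => d + j) N.
Definition nrefl (n : nat) (d : int) (N : n.-tuple int) : n.-tuple int :=
  rev_tuple (map_tuple (fun j => d - j) N).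

Definition ncong (n m : nat) (M : m.-tuple int) (N : n.-tuple int) : Prop :=
  exists j : int, (tval N =i [seq j + i | i <- tval M]) \/
                  (tval N =i [seq j - i | i <- tval M]).
Definition reflsym (n : nat) (N : n.-tuple int) : Prop :=
  exists j : int, tval N =i [seq j - i | i <- tval N].

From HB Require Import structures.
From mathcomp Require Import all_boot all_order all_algebra all_fingroup.
From mathcomp Require Import zify.
From Stdlib Require Import FunctionalExtensionality.
Import Order.TTheory GRing.Theory Num.Theory.
Set Implicit Arguments. Unset Strict Implicit. Unset Printing Implicit Defensive.
Local Open Scope ring_scope.

(* Every generator of T_A acts on a CA map Phi^N_f by acting on N (translation
   or reflection) and on f (rule operators), so the orbit of Phi^N_f consists of
   the maps Phi^{d+N}_{nu f} and Phi^{d-N}_{r nu f}.  For an irreducible rule the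
   map Phi^N_f determines both N and f: every j in N is seen by changing a single
   cell.  Hence Phi^N_{r f} lies in the orbit of Phi^N_f exactly when N = d - N
   or r nu f = f; in that case both descriptions of the orbit merge into
   {Phi^M_g | M ≅ N, g in [f]}, and otherwise the two orbits are distinct. *)

Lemma ltz_trans : transitive (fun a b : int => a < b).
Proof. by move=> y x z; apply: lt_trans. Qed.

Lemma ltz_irr : irreflexive (fun a b : int => a < b).
Proof. exact: ltxx. Qed.

Section Neighbourhoods.
Variable n : nat.
Implicit Types (M N : n.-tuple int) (d e : int).

Lemma nbhd_uniq N : nbhd N -> uniq N.
Proof. exact: (sorted_uniq ltz_trans ltz_irr). Qed.

Lemma nbhd_eq M N : nbhd M -> nbhd N -> M =i N -> M = N.
Proof.
by move=> sM sN eMN; apply/val_inj/(irr_sorted_eq ltz_trans ltz_irr sM sN).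
Qed.

Lemma ntrans0 N : ntrans 0 N = N.
Proof.
by apply: val_inj; rewrite /= (eq_map (g := id)) ?map_id // => j /=; rewrite add0r.
Qed.

Lemma ntrans_ntrans d e N : ntrans d (ntrans e N) = ntrans (d + e) N.
Proof. by apply: val_inj; rewrite /= -map_comp; apply: eq_map => j /=; rewrite addrA. Qed.

Lemma ntrans_nrefl d e N : ntrans d (nrefl e N) = nrefl (d + e) N.
Proof.
by apply: val_inj; rewrite /= map_rev -map_comp; congr rev; apply: eq_map => j /=; lia.
Qed.

Lemma nrefl_nrefl d e N : nrefl d (nrefl e N) = ntrans (d - e) N.
Proof.
by apply: val_inj; rewrite /= map_rev revK -map_comp; apply: eq_map => j /=; lia.
Qed.

Lemma nbhd_ntrans d N : nbhd N -> nbhd (ntrans d N).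
Proof. by apply: homo_sorted => x y /=; rewrite ltrD2l. Qed.

Lemma nbhd_nrefl d N : nbhd N -> nbhd (nrefl d N).
Proof.
by rewrite /nbhd /= rev_sorted; apply: homo_sorted => x y /=; rewrite ltrD2l ltrN2.
Qed.

Lemma mem_nrefl d N j : (j \in nrefl d N) = (j \in [seq d - i | i <- tval N]).
Proof. by rewrite mem_rev. Qed.

Lemma ncong_ntrans d N : ncong (ntrans d N) N.
Proof.
exists (- d); left => x; rewrite /= -map_comp (eq_map (g := id)) ?map_id // => j /=; lia.
Qed.

Lemma ncong_nrefl d N : ncong (nrefl d N) N.
Proof.
exists d; right => x; rewrite /= map_rev mem_rev -map_comp.
by rewrite (eq_map (g := id)) ?map_id // => j /=; lia.
Qed.

Lemma ncongP M N : nbhd M -> nbhd N -> ncong M N ->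
  exists d, M = ntrans d N \/ M = nrefl d N.
Proof.
move=> sM sN [j [eN|eN]].
  have -> : M = ntrans (- j) (ntrans j M) by rewrite ntrans_ntrans addNr ntrans0.
  have -> : ntrans j M = N by apply: nbhd_eq (nbhd_ntrans j sM) sN _ => x; rewrite eN.
  by exists (- j); left.
have -> : M = nrefl j (nrefl j M) by rewrite nrefl_nrefl subrr ntrans0.
have -> : nrefl j M = N.
  by apply: nbhd_eq (nbhd_nrefl j sM) sN _ => x; rewrite eN mem_nrefl.
by exists j; right.
Qed.

Lemma reflsymP N : nbhd N -> reflsym N <-> exists d, nrefl d N = N.
Proof.
move=> sN; split=> [[d eN] | [d eN]]; exists d.
  by apply: nbhd_eq (nbhd_nrefl d sN) sN _ => y; rewrite eN mem_nrefl.
by move=> x; rewrite -{1}eN mem_nrefl.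
Qed.

End Neighbourhoods.

Section GlobalMaps.
Variables (A : Type) (n : nat).
Implicit Types (N : n.-tuple int) (g : n.-tuple A -> A).

Lemma gshift_Phi k N g : gshift k (Phi N g) = Phi (ntrans k N) g.
Proof.
apply: functional_extensionality => x; apply: functional_extensionality => i.
by congr g; apply: eq_from_tnth => j; rewrite !tnth_map addrA.
Qed.

Lemma ghat_r_Phi N g : ghat_r (Phi N g) = Phi (nrefl 0 N) (rhat_r g).
Proof.
apply: functional_extensionality => x; apply: functional_extensionality => i.
congr g; apply: val_inj; rewrite /= map_rev revK -map_comp.
by apply: eq_map => j /=; congr x; lia.
Qed.

Definition nbhd_config N (a : A) (w : n.-tuple A) : config A :=
  fun p => nth a w (index p N).

Lemma nbhd_configE N a w k : uniq N -> nbhd_config N a w (tnth N k) = tnth w k.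
Proof.
by move=> uN; rewrite /nbhd_config (tnth_nth 0) index_uniq ?size_tuple // -tnth_nth.
Qed.

Lemma Phi_nbhd_config N g a w : uniq N -> Phi N g (nbhd_config N a w) 0 = g w.
Proof.
by move=> uN; congr g; apply: eq_from_tnth => k; rewrite tnth_map add0r nbhd_configE.
Qed.

End GlobalMaps.

Section Injectivity.
Variables (A : eqType) (n : nat).
Implicit Types (M N : n.-tuple int) (f g : n.-tuple A -> A).

(* Changing only the cell at j in N changes the output of Phi^N_f, whereas
   Phi^M_g does not read that cell if j is not in M. *)
Lemma Phi_nbhd_sub M N g f :
  irreducible_rule f -> uniq N -> Phi M g = Phi N f -> {subset N <= M}.
Proof.
move=> irr uN eMN _ /tnthP [k ->]; apply/negPn/negP => kM.
have [w [a fw_neq]] := irr k.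
set x := nbhd_config N a w.
set x' := fun p => if p == tnth N k then a else x p.
have Phi_x' : Phi N f x' 0 = f [tuple (if i == k then a else tnth w i) | i < n].
  congr f; apply: eq_from_tnth => i.
  rewrite tnth_map tnth_mktuple add0r /x' (inj_eq (elimT (tuple_uniqP N) uN)).
  by case: (i == k) => //; rewrite /x nbhd_configE.
have Phi_M_x' : Phi M g x' 0 = Phi M g x 0.
  congr g; apply: eq_from_tnth => i; rewrite !tnth_map /x' add0r.
  by case: eqP => // ei; rewrite -ei mem_tnth in kM.
by move: fw_neq; rewrite -Phi_x' -(Phi_nbhd_config f a w uN) -eMN Phi_M_x' eqxx.
Qed.

Lemma Phi_inj M N g f : nbhd M -> nbhd N -> irreducible_rule f ->
  Phi M g = Phi N f -> M = N /\ g = f.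
Proof.
move=> sM sN irr eMN; have uN := nbhd_uniq sN.
have size_MN : (size M <= size N)%N by rewrite !size_tuple.
have [_ memMN] := uniq_min_size uN (Phi_nbhd_sub irr uN eMN) size_MN.
have eqMN : M = N by apply: nbhd_eq => // x; rewrite memMN.
subst M; split => //; apply: functional_extensionality => w.
have := congr1 (fun F => F (nbhd_config N (f w) w) 0) eMN.
by rewrite /= !Phi_nbhd_config.
Qed.

End Injectivity.

Section Symmetries.
Variables (A : finType) (n : nat).
Implicit Types (N : n.-tuple int) (f : n.-tuple A -> A) (nu mu : {perm A}).

Lemma rhat_nu_r nu f : rhat_nu nu (rhat_r f) = rhat_rnu nu f.
Proof.
apply: functional_extensionality => w; congr (nu (f _)).
by apply: val_inj; rewrite /= map_rev.
Qed.

Lemma rhat_rnu_r nu f : rhat_rnu nu (rhat_r f) = rhat_nu nu f.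
Proof.
apply: functional_extensionality => w; congr (nu (f _)).
by apply: val_inj; rewrite /= map_rev revK.
Qed.

Lemma rhat_rnu_rnu nu mu f : rhat_rnu nu (rhat_rnu mu f) = rhat_nu (mu * nu)%g f.
Proof.
apply: functional_extensionality => w; rewrite /rhat_rnu /rhat_nu /rhat_r permM.
congr (nu (mu (f _))); apply: val_inj; rewrite /= !map_rev revK -map_comp.
by apply: eq_map => a /=; rewrite invMg permM.
Qed.

Lemma rhat_nu_rnu nu mu f : rhat_nu nu (rhat_rnu mu f) = rhat_rnu (mu * nu)%g f.
Proof.
apply: functional_extensionality => w; rewrite /rhat_rnu /rhat_nu /rhat_r permM.
congr (nu (mu (f _))); apply: val_inj; rewrite /= !map_rev -map_comp; congr rev.
by apply: eq_map => a /=; rewrite invMg permM.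
Qed.

Lemma ghat_nu_Phi nu N f : ghat_nu nu (Phi N f) = Phi N (rhat_nu nu f).
Proof.
apply: functional_extensionality => x; apply: functional_extensionality => i.
by congr (nu (f _)); apply: eq_from_tnth => k; rewrite !tnth_map.
Qed.

Lemma Tact_Phi k b nu N f : Tact k b nu (Phi N f) =
  if b then Phi (nrefl k N) (rhat_rnu nu f) else Phi (ntrans k N) (rhat_nu nu f).
Proof.
rewrite /Tact ghat_nu_Phi; case: b => /=; last exact: gshift_Phi.
by rewrite ghat_r_Phi gshift_Phi ntrans_nrefl addr0.
Qed.

Lemma T_orbit_Phi N f G : T_orbit (Phi N f) G <-> exists d nu,
  G = Phi (ntrans d N) (rhat_nu nu f) \/ G = Phi (nrefl d N) (rhat_rnu nu f).
Proof.
split=> [[k [b [nu ->]]] | [d [nu [->|->]]]].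
- by exists k, nu; rewrite Tact_Phi; case: b; [right | left].
- by exists d, false, nu; rewrite Tact_Phi.
- by exists d, true, nu; rewrite Tact_Phi.
Qed.

Lemma T_orbit_Phi_r N f G : T_orbit (Phi N (rhat_r f)) G <-> exists d nu,
  G = Phi (ntrans d N) (rhat_rnu nu f) \/ G = Phi (nrefl d N) (rhat_nu nu f).
Proof.
by rewrite T_orbit_Phi; split=> -[d [nu eG]]; exists d, nu; move: eG;
  rewrite rhat_nu_r rhat_rnu_r.
Qed.

Lemma T_orbit_refl (F : gmap A) : T_orbit F F.
Proof.
exists 0, false, 1%g; apply: functional_extensionality => x.
apply: functional_extensionality => i.
rewrite /Tact /gshift /ghat_nu /= addr0 perm1 invg1.
by congr F; apply: functional_extensionality => j; rewrite perm1.
Qed.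

Definition symmetric_rule N f := reflsym N \/ exists nu, rhat_rnu nu f = f.

(* A reflection d - N = N, resp. a symmetry r nu f = f, lets one trade the
   reflected neighbourhood for a translated one, resp. r nu' f for nu'' f. *)
Lemma T_orbit_Phi_symmetric N f G : nbhd N -> symmetric_rule N f ->
  T_orbit (Phi N f) G <-> exists M g,
    [/\ nbhd M, ncong M N, rule_class f g & G = Phi M g].
Proof.
move=> sN symNf; rewrite T_orbit_Phi; split=> [[d [nu [->|->]]] |].
- exists (ntrans d N), (rhat_nu nu f); split=> //; last by exists nu; left.
  + exact: nbhd_ntrans.
  + exact: ncong_ntrans.
- exists (nrefl d N), (rhat_rnu nu f); split=> //; last by exists nu; right.
  + exact: nbhd_nrefl.
  + exact: ncong_nrefl.
move=> [M [g [sM /(ncongP sM sN) [d eM] [mu eg] ->]]].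
case: symNf => [/(reflsymP sN) [e eN] | [nu0 f_sym]]; case: eM eg => -> [] ->.
- by exists d, mu; left.
- by exists (d + e), mu; right; rewrite -{1}eN ntrans_nrefl.
- by exists (d - e), mu; left; rewrite -{1}eN nrefl_nrefl.
- by exists d, mu; right.
- by exists d, mu; left.
- by exists d, (nu0 * mu)%g; left; rewrite -{1}f_sym rhat_rnu_rnu.
- by exists d, (nu0 * mu)%g; right; rewrite -{1}f_sym rhat_nu_rnu.
- by exists d, mu; right.
Qed.

Lemma symmetric_rule_T_orbit_r N f : nbhd N -> irreducible_rule f ->
  T_orbit (Phi N (rhat_r f)) (Phi N f) -> symmetric_rule N f.
Proof.
move=> sN irr /T_orbit_Phi_r [d [nu [eN|eN]]].
  by have [_ f_sym] := Phi_inj (nbhd_ntrans d sN) sN irr (esym eN); right; exists nu.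
have [N_sym _] := Phi_inj (nbhd_nrefl d sN) sN irr (esym eN).
by left; apply/reflsymP => //; exists d.
Qed.

End Symmetries.

Theorem proposition8 (A : finType) (n : nat) (N : n.-tuple int)
  (f : n.-tuple A -> A) :
  nbhd N -> irreducible_rule f ->
  ((reflsym N \/ exists nu : {perm A}, rhat_rnu nu f = f) ->
     forall G : gmap A, T_orbit (Phi N f) G <->
       exists (M : n.-tuple int) (g : n.-tuple A -> A),
         [/\ nbhd M, ncong M N, rule_class f g & G = Phi M g])
  /\
  (~ (reflsym N \/ exists nu : {perm A}, rhat_rnu nu f = f) ->
     [/\ (forall G : gmap A, T_orbit (Phi N f) G <->
            exists (d : int) (nu : {perm A}),
              G = Phi (ntrans d N) (rhat_nu nu f) \/
              G = Phi (nrefl d N) (rhat_rnu nu f)),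
         (forall G : gmap A, T_orbit (Phi N (rhat_r f)) G <->
            exists (d : int) (nu : {perm A}),
              G = Phi (ntrans d N) (rhat_rnu nu f) \/
              G = Phi (nrefl d N) (rhat_nu nu f))
       & ~ (forall G : gmap A, T_orbit (Phi N f) G <-> T_orbit (Phi N (rhat_r f)) G)]).
Proof.
move=> sN irr; split=> [symNf G | asym_Nf]; first exact: T_orbit_Phi_symmetric.
split=> [G | G | same_orbit]; first exact: T_orbit_Phi; first exact: T_orbit_Phi_r.
apply/asym_Nf/symmetric_rule_T_orbit_r => //.
exact/same_orbit/T_orbit_refl.
Qed.
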